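(* Let $e_1,\dots,e_m$ be domains, in each of which a random pair $(X,Y)$ with $X\in\mathbb{R}^d$ is observed, and assume: (i) $Y$ is generated from a linear structural equation model $Y=\beta^\intercal X+N$ with coefficients $\beta\in\mathbb{R}^d$ and noise $N$ with finite second moment; (ii) predictors are linear, $x\mapsto\hat\beta^\intercal x$ with $\hat\beta\in\mathbb{R}^d$; (iii) the loss is squared error, so the risk in domain $e_i$ is $\mathcal{R}^{e_i}(\hat\beta)=\mathbb{E}_{e_i}[(Y-\hat\beta^\intercal X)^2]$; (iv) the risk $\mathbb{E}_{e_i}[(Y-\beta^\intercal X)^2]$ of the causal predictor $\beta$ is the same for all $i=1,\dots,m$; (v) in every domain $e_i$ the covariates and the noise are centered, $\mathbb{E}_{e_i}[X]=0$ and $\mathbb{E}_{e_i}[N]=0$, and the system of equations in $x\in\mathbb{R}^d$ $$0\ge x^\intercal\mathrm{Cov}_{e_1}(X,X)x+2x^\intercal\mathrm{Cov}_{e_1}(X,N)=\cdots=x^\intercal\mathrm{Cov}_{e_m}(X,X)x+2x^\intercal\mathrm{Cov}_{e_m}(X,N)$$ has the unique solution $x=0$. If $\hat\beta$ is a minimal invariant-risk predictor, then $\hat\beta=\beta$.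
   Context: A linear predictor $\hat\beta$ is an invariant-risk predictor if $\mathcal{R}^{e_1}(\hat\beta)=\cdots=\mathcal{R}^{e_m}(\hat\beta)$; it is a minimal invariant-risk predictor if it is an invariant-risk predictor whose (common) risk is minimal among all invariant-risk linear predictors. $\mathrm{Cov}_{e_i}$ denotes covariance under the distribution of domain $e_i$. *)

From HB Require Import structures.
From mathcomp Require Import all_boot all_order all_algebra.
From mathcomp Require Import all_classical all_reals all_analysis.
Set Implicit Arguments. Unset Strict Implicit. Unset Printing Implicit Defensive.
Import Order.TTheory GRing.Theory Num.Theory.
Local Open Scope ring_scope.

Definition linpred {T : Type} {R : realType} {d : nat}
  (b : 'cV[R]_d) (X : 'I_d -> T -> R) : T -> R :=
  fun w => \sum_(j < d) b j 0 * X j w.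

Definition risk {dT : measure_display} {T : measurableType dT} {R : realType} {d : nat}
  (P : probability T R) (X : 'I_d -> T -> R) (Y : T -> R) (b : 'cV[R]_d) : \bar R :=
  'E_P[fun w => (Y w - linpred b X w) ^+ 2].

Definition covXX {dT : measure_display} {T : measurableType dT} {R : realType} {d : nat}
  (P : probability T R) (X : 'I_d -> T -> R) : 'M[R]_d :=
  \matrix_(j, k) fine (covariance P (X j) (X k)).

Definition covXN {dT : measure_display} {T : measurableType dT} {R : realType} {d : nat}
  (P : probability T R) (X : 'I_d -> T -> R) (N : T -> R) : 'cV[R]_d :=
  \col_j fine (covariance P (X j) N).

Definition qform {dT : measure_display} {T : measurableType dT} {R : realType} {d : nat}
  (P : probability T R) (X : 'I_d -> T -> R) (N : T -> R) (x : 'cV[R]_d) : R :=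
  (x^T *m covXX P X *m x) 0 0 + 2 * (x^T *m covXN P X N) 0 0.

Definition invariant_risk {dT : measure_display} {T : measurableType dT} {R : realType}
  {m d : nat} (P : 'I_m -> probability T R) (X : 'I_d -> T -> R) (Y : T -> R)
  (b : 'cV[R]_d) : Prop :=
  forall i j : 'I_m, risk (P i) X Y b = risk (P j) X Y b.

Definition minimal_invariant_risk {dT : measure_display} {T : measurableType dT}
  {R : realType} {m d : nat} (P : 'I_m -> probability T R) (X : 'I_d -> T -> R)
  (Y : T -> R) (b : 'cV[R]_d) : Prop :=
  invariant_risk P X Y b /\
  forall b' : 'cV[R]_d, invariant_risk P X Y b' ->
    forall i : 'I_m, (risk (P i) X Y b <= risk (P i) X Y b')%E.

From HB Require Import structures.
From mathcomp Require Import all_boot all_order all_algebra.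
From mathcomp Require Import all_classical all_reals all_analysis.
From mathcomp Require Import ring.
Import Order.TTheory GRing.Theory Num.Theory.
Local Open Scope ring_scope.

(* With centered covariates and noise, the risk of b in a domain splits as
   q(beta - b) + Var N, where q is the quadratic form of condition (v).
   Invariance of the causal risk makes Var N the same in every domain, so
   invariance of bhat makes q(beta - bhat) the same in every domain, and
   comparing bhat with the invariant predictor beta gives q(beta - bhat) <= 0.
   The uniqueness condition then forces beta - bhat = 0. *)

Section real_covariance.
Context {R : realType} {dT : measure_display} {T : measurableType dT}.
Variable P : probability T R.

Definition cov (f g : T -> R) : R := fine (covariance P f g).

Lemma Lfun2_Lfun1 f : f \in Lfun P 2%:E -> f \in Lfun P 1.
Proof. exact/Lfun_subset12/fin_num_measure. Qed.

Lemma expectation_sum_indexed (I : Type) (r : seq I) (F : I -> T -> R) :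
  (forall i, F i \in Lfun P 1) ->
  ('E_P[\sum_(i <- r) F i] = \sum_(i <- r) 'E_P[F i])%E.
Proof.
move=> F1.
suff [//] : \sum_(i <- r) F i \in Lfun P 1 /\
            ('E_P[\sum_(i <- r) F i] = \sum_(i <- r) 'E_P[F i])%E.
apply: (big_ind2 (fun f e => f \in Lfun P 1 /\ 'E_P[f] = e)%E)
  => [|f e f' e' [f1 <-] [f'1 <-]|i _] //.
- by split; [apply: rpred0 | rewrite -[0]/(cst 0) expectation_cst].
- by split; [apply: rpredD | rewrite expectationD].
Qed.

Lemma covE f g : f \in Lfun P 2%:E -> g \in Lfun P 2%:E ->
  covariance P f g = (cov f g)%:E.
Proof.
move=> f2 g2; rewrite fineK // covariance_fin_num //; last exact: Lfun2_mul_Lfun1.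
- exact: Lfun2_Lfun1.
- exact: Lfun2_Lfun1.
Qed.

Lemma covC f g : cov f g = cov g f.
Proof. by rewrite /cov covarianceC. Qed.

Lemma covDl f g h : f \in Lfun P 2%:E -> g \in Lfun P 2%:E -> h \in Lfun P 2%:E ->
  cov (f \+ g) h = cov f h + cov g h.
Proof. by move=> f2 g2 h2; rewrite /cov covarianceDl // !covE. Qed.

Lemma covDr f g h : f \in Lfun P 2%:E -> g \in Lfun P 2%:E -> h \in Lfun P 2%:E ->
  cov f (g \+ h) = cov f g + cov f h.
Proof. by move=> f2 g2 h2; rewrite covC covDl // !(covC f). Qed.

Lemma covZl a f g : f \in Lfun P 2%:E -> g \in Lfun P 2%:E ->
  cov (a \o* f) g = a * cov f g.
Proof.
move=> f2 g2; rewrite /cov covarianceZl ?covE //; last exact: Lfun2_mul_Lfun1.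
- exact: Lfun2_Lfun1.
- exact: Lfun2_Lfun1.
Qed.

Lemma cov_suml (I : Type) (r : seq I) (F : I -> T -> R) g :
  (forall i, F i \in Lfun P 2%:E) -> g \in Lfun P 2%:E ->
  cov (\sum_(i <- r) F i) g = \sum_(i <- r) cov (F i) g.
Proof.
move=> F2 g2.
suff [//] : \sum_(i <- r) F i \in Lfun P 2%:E /\
            cov (\sum_(i <- r) F i) g = \sum_(i <- r) cov (F i) g.
apply: (big_ind2 (fun f c => f \in Lfun P 2%:E /\ cov f g = c))
  => [|f c f' c' [f2 <-] [f'2 <-]|i _] //.
- by split; [apply: rpred0; rewrite lee1n | rewrite /cov -[0]/(cst 0) covariance_cst_l].
- by split; [apply: rpredD; rewrite ?lee1n | exact: covDl].
Qed.

Lemma expectation_sqr_centered f : f \in Lfun P 2%:E -> ('E_P[f] = 0)%E ->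
  ('E_P[fun w => (f w ^+ 2)%R] = (cov f f)%:E)%E.
Proof.
move=> f2 Ef0; rewrite -covE // covarianceE; first by rewrite Ef0 mule0 sube0.
- exact: Lfun2_Lfun1.
- exact: Lfun2_Lfun1.
- exact: Lfun2_mul_Lfun1.
Qed.

End real_covariance.

Lemma linpredE (T : Type) (R : realType) (d : nat) (b : 'cV[R]_d) (X : 'I_d -> T -> R) :
  linpred b X = \sum_(j < d) (b j 0 \o* X j).
Proof.
by rewrite fct_sumE; apply/funext => w; apply: eq_bigr => j _; rewrite /= mulrC.
Qed.

Lemma linpredB (T : Type) (R : realType) (d : nat) (b b' : 'cV[R]_d)
  (X : 'I_d -> T -> R) :
  linpred (b - b') X = linpred b X \- linpred b' X.
Proof.
apply/funext => w; rewrite /linpred /= -sumrB.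
by apply: eq_bigr => j _; rewrite !mxE mulrBl.
Qed.

Lemma qform0 (R : realType) (dT : measure_display) (T : measurableType dT) (d : nat)
  (P : probability T R) (X : 'I_d -> T -> R) (N : T -> R) : qform P X N 0 = 0.
Proof. by rewrite /qform trmx0 !mul0mx mxE mulr0 addr0. Qed.

Section linear_predictor.
Context {R : realType} {dT : measure_display} {T : measurableType dT}.
Context {P : probability T R} {d : nat} {X : 'I_d -> T -> R}.
Hypothesis X2 : forall j, X j \in Lfun P 2%:E.

Let scaleX2 a j : a \o* X j \in Lfun P 2%:E.
Proof. by rewrite Lfun_scale ?ler1n. Qed.

Lemma linpred_Lfun2 b : linpred b X \in Lfun P 2%:E.
Proof. by rewrite linpredE; apply: rpred_sum => [|p1 j _]; rewrite ?lee1n. Qed.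

Lemma expectation_linpred b :
  ('E_P[linpred b X] = \sum_(j < d) (b j 0)%:E * 'E_P[X j])%E.
Proof.
rewrite linpredE expectation_sum_indexed => [|j]; last exact/Lfun2_Lfun1.
by apply: eq_bigr => j _; rewrite expectationZl //; exact/Lfun2_Lfun1.
Qed.

Lemma cov_linpredl b g : g \in Lfun P 2%:E ->
  cov P (linpred b X) g = (b^T *m covXN P X g) 0 0.
Proof.
move=> g2; rewrite linpredE cov_suml // mxE.
by apply: eq_bigr => j _; rewrite covZl // !mxE.
Qed.

Lemma covXN_linpred b : covXN P X (linpred b X) = covXX P X *m b.
Proof.
apply/matrixP => j i; rewrite [LHS]mxE -/(cov P _ _) covC cov_linpredl // !mxE (ord1 i).
by apply: eq_bigr => k _; rewrite !mxE covarianceC mulrC.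
Qed.

Lemma cov_linpred b b' :
  cov P (linpred b X) (linpred b' X) = (b^T *m covXX P X *m b') 0 0.
Proof. by rewrite cov_linpredl ?linpred_Lfun2 // covXN_linpred mulmxA. Qed.

Lemma qformE N x : N \in Lfun P 2%:E ->
  qform P X N x = cov P (linpred x X) (linpred x X) + 2 * cov P (linpred x X) N.
Proof. by move=> N2; rewrite /qform cov_linpred cov_linpredl. Qed.

Context {N : T -> R} {beta : 'cV[R]_d}.
Hypothesis N2 : N \in Lfun P 2%:E.
Hypothesis Xc : forall j, ('E_P[X j] = 0)%E.
Hypothesis Nc : ('E_P[N] = 0)%E.

Lemma risk_decomposition {Y : T -> R} : Y = (fun w => linpred beta X w + N w) ->
  forall b, risk P X Y b = (qform P X N (beta - b) + cov P N N)%:E.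
Proof.
move=> hY b; set L := linpred (beta - b) X.
have L2 : L \in Lfun P 2%:E := linpred_Lfun2 _.
have EL : ('E_P[L] = 0)%E.
  by rewrite expectation_linpred big1 // => j _; rewrite Xc mule0.
have EZ : ('E_P[L \+ N] = 0)%E.
  by rewrite expectationD ?EL ?Nc ?adde0 //; exact/Lfun2_Lfun1.
have residualE : (fun w => (Y w - linpred b X w) ^+ 2) = (fun w => ((L \+ N) w) ^+ 2).
  by apply/funext => w; rewrite hY /L linpredB /= addrAC.
rewrite /risk residualE expectation_sqr_centered ?rpredD ?lee1n // qformE //.
rewrite covDl ?covDr ?rpredD ?lee1n // (covC P N L).
by congr EFin; ring.
Qed.

End linear_predictor.

Theorem theorem4p3 (R : realType) (dT : measure_display) (T : measurableType dT)
  (m d : nat) (P : 'I_m -> probability T R)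
  (X : 'I_d -> T -> R) (N Y : T -> R) (beta bhat : 'cV[R]_d)
  (* (i) linear SEM; noise (and covariates) with finite second moments *)
  (hY : Y = fun w => linpred beta X w + N w)
  (hN2 : forall i, N \in Lfun (P i) 2%:E)
  (hX2 : forall i j, X j \in Lfun (P i) 2%:E)
  (* (iv) the causal predictor has the same risk in all domains *)
  (hcausal : forall i j, risk (P i) X Y beta = risk (P j) X Y beta)
  (* (v) centering *)
  (hXc : forall i j, ('E_(P i)[X j] = 0)%E)
  (hNc : forall i, ('E_(P i)[N] = 0)%E)
  (* (v) the system 0 >= q_1(x) = ... = q_m(x) has the unique solution x = 0 *)
  (huniq : forall x : 'cV[R]_d,
     (forall i, qform (P i) X N x <= 0) ->
     (forall i j, qform (P i) X N x = qform (P j) X N x) -> x = 0)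
  (hmin : minimal_invariant_risk P X Y bhat) :
  bhat = beta.
Proof.
have riskE i := risk_decomposition (hX2 i) (hN2 i) (hXc i) (hNc i) hY.
have noise_invariant i j : cov (P i) N N = cov (P j) N N.
  by have := hcausal i j; rewrite !riskE subrr !qform0 !add0r => -[].
case: hmin => bhat_invariant bhat_minimal.
suff /eqP : beta - bhat = 0 by rewrite subr_eq0 => /eqP.
apply: huniq => [i | i j].
- have := bhat_minimal beta hcausal i.
  by rewrite !riskE subrr qform0 add0r lee_fin gerDr.
- by have := bhat_invariant i j; rewrite !riskE (noise_invariant i j) => -[] /addIr.
Qed.
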